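(* Let $u\in\mathcal{F}_\mathrm{e}$ and let $u=u_1+u_2$ with $u_1\in\mathcal{F}^{(s)}_\mathrm{e}$ and $u_2\in\mathcal{G}^{(s)}$. Then $u'=u_2'$ a.e. on $F$.
   Context: Let $m$ be Lebesgue measure. $(\mathcal{E},\mathcal{F})=(\frac12\mathbf{D},H^1(\mathbf{R}))$, $\mathcal{E}(u,v)=\frac12\int u'v'dx$, with extended space $\mathcal{F}_\mathrm{e}=\{u\text{ absolutely continuous},\ u'\in L^2(\mathbf{R})\}$. Let $s$ be strictly increasing, absolutely continuous, with $s'\in\{0,1\}$ a.e. Let $(\mathcal{E}^{(s)},\mathcal{F}^{(s)})$ be given by $\mathcal{F}^{(s)}=\{u\in L^2:u\ll s,\int(du/ds)^2ds<\infty\}$ and $\mathcal{E}^{(s)}(u,v)=\frac12\int\frac{du}{ds}\frac{dv}{ds}ds$, with extended space $\mathcal{F}^{(s)}_\mathrm{e}=\{u\ll s:\int(du/ds)^2ds<\infty,\ u(\infty)=0\text{ if }s(\infty)<\infty,\ u(-\infty)=0\text{ if }s(-\infty)>-\infty\}$. Let $G=\{s'=1\}$, $F=\mathbf{R}\setminus G$, and assume $G$ is open, $m(F)>0$ and $F$ has no isolated points. Define $\mathcal{G}^{(s)}=\{u\in\mathcal{F}_\mathrm{e}:\mathcal{E}(u,v)=0\ \forall v\in\mathcal{F}^{(s)}_\mathrm{e}\}$. *)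

From HB Require Import structures.
From mathcomp Require Import all_boot all_order all_algebra.
From mathcomp Require Import all_classical all_reals all_analysis.
Set Implicit Arguments. Unset Strict Implicit. Unset Printing Implicit Defensive.
Import Order.TTheory GRing.Theory Num.Theory.
Import numFieldNormedType.Exports.
Local Open Scope classical_set_scope.
Local Open Scope ring_scope.

Definition abs_cont_wrt {R : realType} (s f : R -> R) (a b : R) : Prop :=
  forall eps : R, 0 < eps -> exists2 delta : R, 0 < delta &
    forall (n : nat) (x y : 'I_n -> R),
      (forall i, a <= x i /\ x i <= y i /\ y i <= b) ->
      (forall i j, i != j -> y i <= x j \/ y j <= x i) ->
      \sum_(i < n) (s (y i) - s (x i)) < delta ->
      \sum_(i < n) `|f (y i) - f (x i)| < eps.

Definition abs_cont {R : realType} (f : R -> R) : Prop :=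
  forall a b : R, abs_cont_wrt id f a b.

Definition abs_cont_s {R : realType} (s u : R -> R) : Prop :=
  forall a b : R, abs_cont_wrt s u a b.

Definition leb {R : realType} := (@lebesgue_measure R).

(* extended Dirichlet space F_e of (1/2 D, H^1(R)) *)
Definition Fe {R : realType} (u : R -> R) : Prop :=
  abs_cont u /\ measurable_fun setT (derive1 u) /\
  (\int[leb]_x ((derive1 u x) ^+ 2)%:E < +oo)%E.

Definition Eform {R : realType} (u v : R -> R) : \bar R :=
  ((2^-1)%:E * \int[leb]_x ((derive1 u x * derive1 v x)%:E))%E.

(* extended space F^(s)_e : u << s, with du/ds = h (density of du w.r.t. the
   Lebesgue-Stieltjes measure ds), \int (du/ds)^2 ds < oo, and the boundary
   conditions at +-oo *)
Definition Fse {R : realType} (s : cumulative R R) (u : R -> R) : Prop :=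
  abs_cont_s s u /\
  (exists h : R -> R,
     measurable_fun setT h /\
     (forall a b : R, a < b ->
        ((u b - u a)%:E =
        \int[lebesgue_stieltjes_measure s]_(x in `]a, b]) (h x)%:E)%E) /\
     (\int[lebesgue_stieltjes_measure s]_x ((h x) ^+ 2)%:E < +oo)%E) /\
  ((exists M : R, forall x, s x <= M) -> u x @[x --> +oo] --> 0) /\
  ((exists M : R, forall x, M <= s x) -> u x @[x --> -oo] --> 0).

Definition Gs {R : realType} (s : cumulative R R) (u : R -> R) : Prop :=
  Fe u /\ forall v, Fse s v -> Eform u v = 0%E.

Definition Gset {R : realType} (s : R -> R) : set R :=
  [set x | derivable s x 1 /\ derive1 s x = 1].

From HB Require Import structures.
From mathcomp Require Import all_boot all_order all_algebra.
From mathcomp Require Import all_classical all_reals all_analysis.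
From mathcomp Require Import ring lra.
Import Order.TTheory GRing.Theory Num.Theory.
Import numFieldNormedType.Exports.
Local Open Scope classical_set_scope.
Local Open Scope ring_scope.

(* At almost every point [x] of [F] we have [s'(x) = 0], since [s' \in {0, 1}]
   a.e. There [u1], being absolutely continuous with respect to [s], is flat
   as well: if its difference quotients at [x] stay above [c > 0] along
   arbitrarily small steps [h] while those of [s] are below [eta], Vitali's
   covering lemma extracts disjoint steps of small total [s]-length whose total
   [u1]-oscillation is at least [c] times their total length; absolute
   continuity with respect to [s] makes that length, hence the outer measure of
   such points, arbitrarily small.  As the difference quotients of [u = u1 + u2]
   and [u2] then differ by a null function of [h], [u'(x) = u2'(x)].  Besides
   the decomposition, only [u1 << s] and [s' \in {0, 1}] a.e. are needed. *)

Definition diff_quot {R : realType} (f : R -> R) (x h : R) : R :=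
  h^-1 *: (f (h + x) - f x).

Section difference_quotients.
Context {R : realType}.
Implicit Types (f g e : R -> R) (x h : R).

Lemma lim_addr_cvg0 {T : Type} {F : set_system T} {FF : Filter F} (g e : T -> R) :
  e @ F --> 0 -> lim ((g \+ e) @ F) = lim (g @ F).
Proof.
move=> e0; rewrite /lim /lim_in; congr get; apply: funext => l.
apply: propext; split => gl.
- have -> : g = (g \+ e) \- e by apply: funext => t /=; rewrite addrK.
  by rewrite -[l]subr0; apply: cvgB.
- by rewrite -[l]addr0; apply: cvgD.
Qed.

Lemma derive1_diff_quot f x : derive1 f x = lim (diff_quot f x @ 0^').
Proof. by []. Qed.

Lemma diff_quotD f g x : diff_quot (f \+ g) x = diff_quot f x \+ diff_quot g x.
Proof.
by apply: funext => h; rewrite /diff_quot /= -scalerDr opprD addrACA.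
Qed.

Lemma derive1D_flat g e x :
  diff_quot e x @ 0^' --> 0 -> derive1 (g \+ e) x = derive1 g x.
Proof. by move=> e0; rewrite !derive1_diff_quot diff_quotD lim_addr_cvg0. Qed.

Lemma diff_quot_cvg {f x} : derivable f x 1 -> diff_quot f x @ 0^' --> derive1 f x.
Proof.
move=> df; rewrite derive1E.
have -> : diff_quot f x = fun h => h^-1 *: ((f \o shift x) (h *: 1) - f x).
  by apply: funext => h /=; rewrite /diff_quot -[h *: 1]/(h * 1) mulr1.
exact: df.
Qed.

Lemma normr_diff_quot f x h :
  h != 0 -> `|diff_quot f x h| = `|f (h + x) - f x| / `|h|.
Proof. by move=> h0; rewrite /diff_quot normrZ normfV mulrC. Qed.

Lemma normr_diff_quot_le f x h (eta : R) : h != 0 ->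
  (`|diff_quot f x h| <= eta) = (`|f (h + x) - f x| <= eta * `|h|).
Proof. by move=> h0; rewrite normr_diff_quot // ler_pdivrMr ?normr_gt0. Qed.

Lemma normr_diff_quot_ge f x h (c : R) : h != 0 ->
  (c <= `|diff_quot f x h|) = (c * `|h| <= `|f (h + x) - f x|).
Proof. by move=> h0; rewrite normr_diff_quot // ler_pdivlMr ?normr_gt0. Qed.

Lemma cvg0_at0_le {f} {eta : R} : f @ 0^' --> 0 -> 0 < eta ->
  exists2 rho : R, 0 < rho & forall h, h != 0 -> `|h| < rho -> `|f h| <= eta.
Proof.
move=> /cvgrPdist_lt f0 eta0; have := f0 eta eta0.
rewrite near_withinE => /nbhs_ballP[rho rho0 near_f]; exists rho => // h h0 hrho.
by apply: ltW; have := near_f h; rewrite /ball /= !sub0r !normrN; apply.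
Qed.

Lemma not_cvg0_at0 f : ~ (f @ 0^' --> 0) ->
  exists2 eps : R, 0 < eps &
    forall rho : R, 0 < rho -> exists h, [/\ h != 0, `|h| < rho & eps <= `|f h|].
Proof.
move=> nf; apply: contrapT => neps; apply: nf; apply/cvgrPdist_lt => eps eps0.
have /existsNP[rho /not_implyP[rho0 /forallNP small]] : ~ (forall rho : R, 0 < rho ->
    exists h, [/\ h != 0, `|h| < rho & eps <= `|f h|]).
  by move=> big; apply: neps; exists eps.
rewrite near_withinE; apply/nbhs_ballP; exists rho => //= h.
rewrite /ball /= !sub0r !normrN => hrho h0; rewrite ltNge; apply/negP => epsf.
exact: (small h).
Qed.

End difference_quotients.

Section intervals.
Context {R : realType}.

Lemma disjoint_itv_le (a b c d : R) : a <= b -> c <= d ->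
  ~ (exists z, a <= z <= b /\ c <= z <= d) -> b <= c \/ d <= a.
Proof.
move=> ab cd nz; case: (leP b c) => [|cb]; first by left.
case: (leP d a) => [|ad]; first by right.
by exfalso; apply: nz; exists (Num.max a c); rewrite !ge_max !le_max; lra.
Qed.

Lemma normr_maxB_min (f : R -> R) (a b : R) :
  `|f (Num.max a b) - f (Num.min a b)| = `|f b - f a|.
Proof. by case: (leP a b) => _; rewrite // distrC. Qed.

Lemma nondecreasing_maxB_min (f : R -> R) (a b : R) : {homo f : x y / x <= y} ->
  f (Num.max a b) - f (Num.min a b) = `|f b - f a|.
Proof.
move=> f_nd; rewrite -normr_maxB_min ger0_norm // subr_ge0.
by apply: f_nd; rewrite ge_min !le_max lexx.
Qed.

End intervals.

Section covering.
Context {R : realType}.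
Local Notation mu := (@lebesgue_measure R).

(* Induction on [N]: as every [r k <= 1], the first [N.+1] intervals have total
   [s]-length below [eta * (eps / c + 1) < delta], so their [u]-oscillation is
   below [eps], which gives the bound for [N.+1]. *)
Lemma abs_cont_wrt_sum_lt {s u : R -> R} {a b c eps : R} :
  abs_cont_wrt s u a b -> 0 < c -> 0 < eps ->
  exists2 eta : R, 0 < eta & forall X Y r : nat -> R,
    (forall k, a <= X k /\ X k <= Y k /\ Y k <= b) ->
    (forall k k', k != k' -> Y k <= X k' \/ Y k' <= X k) ->
    (forall k, s (Y k) - s (X k) <= eta * r k) ->
    (forall k, c * r k <= `|u (Y k) - u (X k)|) ->
    (forall k, 0 <= r k <= 1) ->
    forall N, \sum_(k < N) r k < eps / c.
Proof.
move=> uac c0 eps0; have [delta delta0 hdelta] := uac eps eps0.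
have bound0 : 0 < eps / c + 1 by rewrite addr_gt0 // divr_gt0.
pose eta := delta / (2 * (eps / c + 1)).
exists eta; first by rewrite divr_gt0 // mulr_gt0.
move=> X Y r XYab XYdisj sXY uXY r01; elim=> [|N IH]; first by rewrite big_ord0 divr_gt0.
have sumr_le : \sum_(k < N.+1) r k <= eps / c + 1.
  by rewrite big_ord_recr /= lerD //; [exact: ltW | case/andP: (r01 N)].
have sumu : \sum_(k < N.+1) `|u (Y k) - u (X k)| < eps.
  apply: (hdelta N.+1 (X \o val) (Y \o val)) => [k|k k' kk'|]; first exact: XYab.
    exact: XYdisj.
  apply: (@le_lt_trans _ _ (\sum_(k < N.+1) eta * r k)).
    by apply: ler_sum => k _; exact: sXY.
  rewrite -mulr_sumr (le_lt_trans (ler_wpM2l _ sumr_le)) ?divr_ge0 ?mulr_ge0 ?ltW //.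
  rewrite /eta invfM -!mulrA mulVf ?gt_eqF // mulr1.
  by rewrite gtr_pMr // invf_lt1 // ltr1n.
rewrite ltr_pdivlMr // mulrC mulr_sumr (le_lt_trans _ sumu) //.
exact: ler_sum.
Qed.

Lemma lebesgue_measure_le_closed_balls (A : set R) (x r : nat -> R) (C : R) :
  (forall k, 0 <= r k) -> (forall N, \sum_(k < N) r k <= C) ->
  A `<=` \bigcup_k closed_ball (x k) (r k) -> (mu A <= (C *+ 2)%:E)%E.
Proof.
move=> r0 sumr Acov; apply: (le_trans (le_outer_measure mu _ _ Acov)).
apply: (le_trans (outer_measure_sigma_subadditive mu _)).
rewrite (eq_eseriesr (fun k _ => lebesgue_measure_closed_ball (x k) (r0 k))).
apply: lime_le; first by apply: is_cvg_nneseries => k _ _; rewrite lee_fin mulrn_wge0.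
by apply: nearW => N /=; rewrite sumEFin lee_fin big_mkord sumrMnl lerMn2r sumr orbT.
Qed.

End covering.

Section vitali_steps.
Context {R : realType}.

Lemma countable_padded_enum {T : choiceType} (D : set T) (x0 : T) :
  countable D -> ~ D x0 ->
  exists e : nat -> T, [/\ forall k, e k = x0 \/ D (e k),
    forall k k', D (e k) -> e k = e k' -> k = k' & D `<=` range e].
Proof.
move=> /countable_injP[f f_inj] Dx0.
pose e k := xget x0 [set i | D i /\ f i = k].
have e_ex k : (exists i, D i /\ f i = k) -> D (e k) /\ f (e k) = k by exact: xgetPex.
have e_nex k : ~ (exists i, D i /\ f i = k) -> e k = x0.
  by move=> nex; apply: xgetPN => i Di; apply: nex; exists i.
have f_e k : D (e k) -> f (e k) = k.
  have [/e_ex[]//|/e_nex ->] := pselect (exists i, D i /\ f i = k).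
  by move=> /Dx0.
exists e; split.
- by move=> k; have [/e_ex[]|/e_nex] := pselect (exists i, D i /\ f i = k);
    [right | left].
- move=> k k' Dk ekk'; have Dk' : D (e k') by rewrite -ekk'.
  by rewrite -(f_e k Dk) -(f_e k' Dk') ekk'.
- move=> i Di; have [|Dei fei] := e_ex (f i); first by exists i.
  by exists (f i) => //; apply: f_inj; rewrite ?inE.
Qed.

Lemma closed_ball_step (x h z : R) : h != 0 ->
  Num.min x (h + x) <= z <= Num.max x (h + x) -> closed_ball x `|h| z.
Proof.
move=> h0; rewrite closed_ball_itv ?normr_gt0 //= in_itv /= ge_min !le_max.
move=> /andP[/orP[] ? /orP[] ?];
  by have [?|?] := leP 0 h; [rewrite ger0_norm | rewrite ltr0_norm] => //; lra.
Qed.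

Lemma disjoint_closed_balls_step_le (x h x' h' : R) : h != 0 -> h' != 0 ->
  ~ (exists z, closed_ball x `|h| z /\ closed_ball x' `|h'| z) ->
  Num.max x (h + x) <= Num.min x' (h' + x') \/
  Num.max x' (h' + x') <= Num.min x (h + x).
Proof.
move=> h0 h'0 disj; apply: disjoint_itv_le; rewrite ?ge_min ?le_max ?lexx //.
by move=> [z [zh zh']]; apply: disj; exists z; split; exact: closed_ball_step.
Qed.

(* The Vitali selection is run on the balls [ball x |h|] indexed by steps
   [(x, h)]; the radius [1] given to [h = 0] is a junk value, and the junk
   steps [(- (M + 1), 0)] pad a finite selection to a sequence. *)
Lemma vitali_disjoint_steps (P : R -> R -> Prop) (A : set R) (M : R) :
  (forall x, A x -> `|x| < M /\
     forall rho : R, 0 < rho -> exists h, [/\ h != 0, `|h| < rho & P x h]) ->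
  exists x h : nat -> R, [/\
    forall k, (x k = - (M + 1) /\ h k = 0) \/
              [/\ `|x k| < M, `|h k| < 1, h k != 0 & P (x k) (h k)],
    forall k k', k != k' ->
      Num.max (x k) (h k + x k) <= Num.min (x k') (h k' + x k') \/
      Num.max (x k') (h k' + x k') <= Num.min (x k) (h k + x k) &
    A `<=` \bigcup_k closed_ball (x k) (5 * `|h k|)].
Proof.
move=> Asteps.
pose rad (i : R * R) := if i.2 == 0 then 1 else `|i.2|.
pose B i := ball i.1 (rad i).
pose V := [set i : R * R | [/\ `|i.1| < M, `|i.2| < 1, i.2 != 0 & P i.1 i.2]].
have rad_gt0 i : 0 < rad i by rewrite /rad; case: ifPn; rewrite ?normr_gt0.
have radB i : (radius (B i))%:num = rad i by rewrite radius_ball_num // ltW.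
have radV i : V i -> rad i = `|i.2| by case=> _ _ /negbTE h0 _; rewrite /rad h0.
have clB i : V i -> closure (B i) = closed_ball i.1 `|i.2|.
  by move=> Vi; rewrite closure_ballE /B radV.
have B_gt0 i : 0 < (radius (B i))%:num by rewrite radB.
have VB_le1 i : V i -> (radius (B i))%:num <= 1.
  by move=> Vi; rewrite radB radV //; case: Vi => _ /ltW.
have [D [cD DV tD covD]] :=
  vitali_lemma_infinite_cover (fun i => is_ball_ball _ _) B_gt0 VB_le1.
have [|e [eP e_inj De]] := countable_padded_enum D (- (M + 1), 0) cD.
  by move=> /DV[_ _ /eqP].
have lo_gt i : V i -> - (M + 1) < Num.min i.1 (i.2 + i.1).
  case=> iM i1 _ _; rewrite lt_min; move: iM i1.
  by rewrite !ltr_norml => /andP[? ?] /andP[? ?]; apply/andP; split; lra.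
exists (fst \o e), (snd \o e); split => /=.
- by move=> k; case: (eP k) => [->|/DV Vk]; [left | right].
- move=> k k' kk'; case: (eP k) (eP k') => [->|Dk] [->|Dk'] /=.
  + by left; rewrite add0r maxxx minxx.
  + by left; rewrite add0r maxxx ltW // lo_gt //; exact: DV.
  + by right; rewrite add0r maxxx ltW // lo_gt //; exact: DV.
  + have [[_ _ hk0 _] [_ _ hk'0 _]] := (DV _ Dk, DV _ Dk').
    apply: disjoint_closed_balls_step_le => // -[z zkk'].
    move/negP: kk'; apply; apply/eqP/(e_inj _ _ Dk)/tD => //.
    by exists z; rewrite /= !clB //; exact: DV.
- move=> z /Asteps[zM /(_ 1 ltr01)[h [h0 h1 Pzh]]].
  have [|j Dj zj] := covD z.
    by exists (z, h); [split | apply: subset_closure; exact: ballxx].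
  have [k _ ekj] := De j Dj; exists k => //=; rewrite ekj -radV; last exact: DV.
  by move: zj; rewrite /= scale_ballE // closure_ballE.
Qed.

End vitali_steps.

Section flat_points.
Context {R : realType} {s u : R -> R}.
Hypothesis s_nd : {homo s : x y / x <= y}.
Hypothesis u_ac : forall a b, abs_cont_wrt s u a b.
Local Notation mu := (@lebesgue_measure R).

Lemma steep_set_negligible (A : set R) (M c : R) : 0 < M -> 0 < c ->
  (forall x, A x -> `|x| < M /\ forall eta rho : R, 0 < eta -> 0 < rho ->
     exists h, [/\ h != 0, `|h| < rho &
                   `|diff_quot s x h| <= eta /\ c <= `|diff_quot u x h|]) ->
  mu.-negligible A.
Proof.
move=> M0 c0 Asteep; apply/negligible_outer_measure.
have mu_le eps : 0 < eps -> (mu A <= ((5 * (eps / c)) *+ 2)%:E)%E.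
  move=> eps0; have [eta eta0 sum_lt] :=
    abs_cont_wrt_sum_lt (u_ac (- (M + 1)) (M + 1)) c0 eps0.
  have [|x [h [steps disj Acov]]] := @vitali_disjoint_steps _
      (fun x h => `|diff_quot s x h| <= eta /\ c <= `|diff_quot u x h|) A M.
    by move=> x /Asteep[xM steep]; split => // rho; exact: steep.
  pose X k := Num.min (x k) (h k + x k); pose Y k := Num.max (x k) (h k + x k).
  have sumh N : \sum_(k < N) `|h k| < eps / c.
    apply: (sum_lt X Y (fun k => `|h k|)) => // k;
      rewrite /X /Y; have [[xk hk]|[xM h1 h0 [sh uh]]] := steps k.
    all: try by rewrite ?xk hk ?add0r ?minxx ?maxxx ?subrr ?normr0 ?mulr0; lra.
    - move: xM h1; rewrite !ltr_norml => /andP[? ?] /andP[? ?].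
      by rewrite le_min ge_max ge_min le_max; lra.
    - by rewrite nondecreasing_maxB_min // -normr_diff_quot_le.
    - by rewrite normr_maxB_min -normr_diff_quot_ge.
    - by rewrite normr_ge0 ltW.
  apply: lebesgue_measure_le_closed_balls Acov => [k|N]; first by rewrite mulr_ge0.
  by rewrite -mulr_sumr ler_wpM2l ?ltW.
apply/eqP; rewrite eq_le outer_measure_ge0 andbT; apply/lee_addgt0Pr => e e0.
have -> : e = (5 * (e * c / 10 / c)) *+ 2 by rewrite -mulr_natr; field; rewrite gt_eqF.
by rewrite add0e mu_le // !mulr_gt0 ?invr_gt0.
Qed.

Lemma flat_not_flat_negligible :
  mu.-negligible [set x | diff_quot s x @ 0^' --> 0 /\ ~ (diff_quot u x @ 0^' --> 0)].
Proof.
pose A m := [set x : R | `|x| < m.+1%:R /\ diff_quot s x @ 0^' --> 0 /\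
  forall rho : R, 0 < rho ->
    exists h, [/\ h != 0, `|h| < rho & m.+1%:R^-1 <= `|diff_quot u x h|]].
have A_negligible : mu.-negligible (\bigcup_m A m).
  apply: negligible_bigcup => m.
  apply: (@steep_set_negligible _ m.+1%:R m.+1%:R^-1) => // x [xm [s0 steep]].
  split => // eta rho eta0 rho0; have [rho' rho'0 s_small] := cvg0_at0_le s0 eta0.
  have [|h [h0 hrho uh]] := steep (Num.min rho rho'); first by rewrite lt_min rho0.
  move: hrho; rewrite lt_min => /andP[? ?].
  by exists h; split => //; split => //; exact: s_small.
apply: negligibleS A_negligible => x [s0 /not_cvg0_at0[eps eps0 steep]].
have epsV0 : 0 <= eps^-1 by rewrite invr_ge0 ltW.
have /archi_boundP := addr_ge0 (normr_ge0 x) epsV0; set m := Num.bound _ => xm.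
have m_lt : m%:R < m.+1%:R :> R by rewrite ltr_nat.
exists m => //; split; first by have := normr_ge0 x; lra.
split => // rho rho0; have [h [h0 hrho epsu]] := steep rho rho0; exists h; split => //.
apply: le_trans epsu; rewrite -[leRHS]invrK lef_pV2 ?posrE ?invr_gt0 //.
by have := normr_ge0 x; lra.
Qed.

End flat_points.

Theorem mainTheorem9 (R : realType) (s : cumulative R R)
  (s_incr : {mono s : x y / x < y})
  (s_ac : abs_cont s)
  (s_deriv : {ae leb, forall x, derivable s x 1 /\ (derive1 s x = 0 \/ derive1 s x = 1)})
  (G_open : open (Gset s))
  (F_pos : (0 < leb (~` Gset s))%E)
  (F_perfect : forall x, (~` Gset s) x -> forall e : R, 0 < e ->
       exists y, (~` Gset s) y /\ y != x /\ `|y - x| < e)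
  (u u1 u2 : R -> R)
  (hu : Fe u) (hu1 : Fse s u1) (hu2 : Gs s u2)
  (hdec : forall x, u x = u1 x + u2 x) :
  {ae leb, forall x, (~` Gset s) x -> derive1 u x = derive1 u2 x}.
Proof.
have s_nd : {homo s : x y / x <= y}.
  by move=> x y; rewrite (le_mono (f := s)) // => a b; rewrite s_incr.
have u_eq : u = u2 \+ u1 by apply: funext => x; rewrite hdec addrC.
have Z_negligible := flat_not_flat_negligible s_nd hu1.1.
apply: negligibleS (negligibleU s_deriv Z_negligible) => x /= /not_implyP[xF u'x].
have [[ds [s'0|s'1]]|] := pselect (derivable s x 1 /\ (derive1 s x = 0 \/ derive1 s x = 1)).
- right; split; first by have := diff_quot_cvg ds; rewrite s'0.
  by move=> u1_flat; apply: u'x; rewrite u_eq derive1D_flat.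
- by exfalso; apply: xF.
- by left.
Qed.
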